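(* Let $\mathcal L$ be a class of modules and $M$ a module. (1) If every finite subset of $M$ is contained in an $\mathcal L$-pure submodule of $M$ that is $\mathcal L$-atomic, then $M$ is $\mathcal L$-atomic (hence $\langle\mathcal L\rangle$-atomic). (2) If every finite subset of $M$ is contained in a locally split submodule of $M$ that is strict $\mathcal L$-atomic, then $M$ is strict $\mathcal L$-atomic. (3) If every finite subset of $M$ is contained in a locally split submodule of $M$ that is countably generated and strict $\mathcal L$-atomic, then $M$ is strict $\langle\mathcal L\rangle$-atomic.
   Context: $R$ is a ring with $1$; modules are left $R$-modules; $\mathcal L$ is nonempty. pp formulas, $\phi(M)$, ${\rm pp}_M(\bar m)$ as usual; $\phi\le_{\mathcal L}\psi$ means $\phi(L)\subseteq\psi(L)$ for all $L\in\mathcal L$; $\langle\mathcal L\rangle$ is the definable subcategory generated by $\mathcal L$ (modules $N$ with $\phi(N)\subseteq\psi(N)$ whenever $\phi\le_{\mathcal L}\psi$). $M$ is $\mathcal L$-atomic if for every finite tuple $\bar m$ in $M$ there is $\phi\in{\rm pp}_M(\bar m)$ with $\phi\le_{\mathcal L}\psi$ for all $\psi\in{\rm pp}_M(\bar m)$. A submodule $N\subseteq M$ is $\mathcal L$-pure if for every tuple $\bar n$ in $N$ and pp $\phi$ with $\bar n\in\phi(M)$ there is pp $\psi\le_{\mathcal L}\phi$ with $\bar n\in\psi(N)$. $N\subseteq M$ is locally split if for every finite tuple $\bar n$ in $N$ there is a homomorphism $g:M\to N$ with $g(\bar n)=\bar n$. $(M,\bar m)$ is an $\mathcal L$-free realization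 of pp $\phi$ if $\bar m\in\phi(M)$ and for all $L\in\mathcal L$, $\bar c\in\phi(L)$ there is a homomorphism $M\to L$ sending $\bar m$ to $\bar c$; $M$ is strict $\mathcal L$-atomic if every finite tuple in $M$ is an $\mathcal L$-free realization of some pp formula. *)

From HB Require Import structures.
From mathcomp Require Import all_boot all_algebra.
Set Implicit Arguments. Unset Strict Implicit. Unset Printing Implicit Defensive.
Import GRing.Theory.
Local Open Scope ring_scope.

Section PP.
Variable R : pzRingType.

Definition modclass := lmodType R -> Prop.

(* A pp formula in n free variables: exists ybar (of length k),
   H (xbar ybar)^T = 0, where H is an m x (n+k) matrix over R. *)
Record ppf (n : nat) := PPF {
  pp_m : nat;
  pp_k : nat;
  pp_H : 'M[R]_(pp_m, n + pp_k) }.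

Definition catv (M : lmodType R) n k (x : 'I_n -> M) (y : 'I_k -> M)
  (j : 'I_(n + k)) : M :=
  match split j with inl a => x a | inr b => y b end.

Definition pp_holds (M : lmodType R) n (phi : ppf n) (x : 'I_n -> M) : Prop :=
  exists y : 'I_(pp_k phi) -> M,
    forall i : 'I_(pp_m phi),
      \sum_(j < n + pp_k phi) pp_H phi i j *: catv x y j = 0.

Definition ple (L : modclass) n (phi psi : ppf n) : Prop :=
  forall N : lmodType R, L N ->
    forall x : 'I_n -> N, pp_holds phi x -> pp_holds psi x.

(* <L> : the definable subcategory generated by L *)
Definition defcat (L : modclass) : modclass := fun N =>
  forall n (phi psi : ppf n), ple L phi psi ->
    forall x : 'I_n -> N, pp_holds phi x -> pp_holds psi x.

Definition atomic (L : modclass) (M : lmodType R) : Prop :=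
  forall n (m : 'I_n -> M), exists phi : ppf n,
    pp_holds phi m /\ forall psi : ppf n, pp_holds psi m -> ple L phi psi.

Definition pure (L : modclass) (N M : lmodType R) (i : {linear N -> M}) : Prop :=
  forall n (x : 'I_n -> N) (phi : ppf n), pp_holds phi (fun a => i (x a)) ->
    exists psi : ppf n, ple L psi phi /\ pp_holds psi x.

Definition locally_split (N M : lmodType R) (i : {linear N -> M}) : Prop :=
  forall n (x : 'I_n -> N), exists g : {linear M -> N},
    forall a, g (i (x a)) = x a.

Definition free_realization (L : modclass) (M : lmodType R) n
    (phi : ppf n) (m : 'I_n -> M) : Prop :=
  pp_holds phi m /\
  forall N : lmodType R, L N -> forall c : 'I_n -> N, pp_holds phi c ->
    exists h : {linear M -> N}, forall a, h (m a) = c a.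

Definition strict_atomic (L : modclass) (M : lmodType R) : Prop :=
  forall n (m : 'I_n -> M), exists phi : ppf n, free_realization L phi m.

Definition countably_generated (N : lmodType R) : Prop :=
  exists f : nat -> N, forall x : N,
    exists n (r : 'I_n -> R), x = \sum_(a < n) r a *: f a.

Definition contains_tuple (N M : lmodType R) (i : N -> M) n (x : 'I_n -> M) :=
  forall a, exists y : N, i y = x a.

End PP.

From HB Require Import structures.
From mathcomp Require Import all_boot all_algebra.
From Stdlib Require Import Classical ClassicalEpsilon FunctionalExtensionality.
Set Implicit Arguments. Unset Strict Implicit. Unset Printing Implicit Defensive.
Import GRing.Theory.
Local Open Scope ring_scope.

(* Parts (1) and (2) are direct: a tuple of M lifts to a tuple y of a
   submodule N; a pp formula generating the type of y in N (resp. having y as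
   a free realization) still does so for its image in M, by purity (resp. by
   composing with a retraction M -> N fixing y).  The general statement
   [strict_atomic_of_split_cover] holds for any class K, so part (3) reduces
   to: a countably generated strict L-atomic module N is strict <L>-atomic.
   For this, list a tuple y followed by generators of N as a sequence u; a
   realization c of the formula freely realized by y in N' in <L> is extended
   one term at a time to a sequence w with the pp type of every prefix of u
   contained in that of w ([type_le_extend], [forth_sequence]), using that
   the type of u_p over u_0 .. u_(p-1) is generated by a pp formula.  Such a
   w satisfies every linear relation of u, so u_j |-> w_j extends to a
   homomorphism ([linear_extension]). *)

Section Basics.
Variable R : pzRingType.

Lemma pp_holds_hom (M N : lmodType R) (f : {linear M -> N}) n (phi : ppf R n) x :
  pp_holds phi x -> pp_holds phi (fun a => f (x a)).
Proof.
case=> y Hy; exists (fun b => f (y b)) => i.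
rewrite (eq_bigr (fun j => f (pp_H phi i j *: catv x y j))); last first.
  by move=> j _; rewrite linearZ /catv; case: split.
by rewrite -linear_sum Hy linear0.
Qed.

Lemma tuple_preimage (N M : lmodType R) (i : N -> M) n (x : 'I_n -> M) :
  contains_tuple i x -> exists y : 'I_n -> N, (fun a => i (y a)) = x.
Proof.
move=> /(ClassicalEpsilon.choice (fun a y => i y = x a)) [y Hy].
by exists y; apply: functional_extensionality.
Qed.

Lemma free_realization_type (L : modclass R) (N : lmodType R) n (phi : ppf R n)
    (y : 'I_n -> N) (N' : lmodType R) (c : 'I_n -> N') :
  free_realization L phi y -> defcat L N' -> pp_holds phi c ->
  forall psi, pp_holds psi y -> pp_holds psi c.
Proof.
move=> [_ FR] DN' Hc psi Hpsi; apply: (DN' n phi psi) Hc => L0 HL0 x Hx.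
have [h Hh] := FR L0 HL0 x Hx.
have -> : x = (fun a => h (y a)) by apply: functional_extensionality => a.
exact: pp_holds_hom.
Qed.

(* L-atomic modules are <L>-atomic: [phi <=_L psi] implies [phi <=_<L> psi]. *)
Lemma atomic_defcat (L : modclass R) (M : lmodType R) :
  atomic L M -> atomic (defcat L) M.
Proof.
move=> A n m; have [phi [Hphi Hgen]] := A n m.
by exists phi; split=> // psi Hpsi N DN x Hx; apply: (DN n phi psi (Hgen psi Hpsi)).
Qed.

(* Part (1): atomicity is inherited from enough pure atomic submodules,
   since purity lets a generator of the type of [y] in [N] bound every pp
   formula satisfied by [i y] in [M]. *)
Lemma atomic_of_pure_cover (L : modclass R) (M : lmodType R) :
  (forall n (x : 'I_n -> M), exists (N : lmodType R) (i : {linear N -> M}),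
       injective i /\ contains_tuple i x /\ pure L i /\ atomic L N) ->
  atomic L M.
Proof.
move=> H n m; have [N [i [_ [ct [pu At]]]]] := H n m.
have [y <-] := tuple_preimage ct.
have [phi [Hphi Hgen]] := At n y.
exists phi; split; first exact: pp_holds_hom.
move=> psi /pu [psi' [Hle Hpsi']] L0 HL0 x Hx.
exact: (Hle L0 HL0 x (Hgen psi' Hpsi' L0 HL0 x Hx)).
Qed.

(* Free realizations transfer along a locally split embedding: compose the
   lifting homomorphism with a retraction fixing the tuple. *)
Lemma free_realization_split (K : modclass R) (N M : lmodType R)
    (i : {linear N -> M}) (g : {linear M -> N}) n (phi : ppf R n) (y : 'I_n -> N) :
  (forall a, g (i (y a)) = y a) ->
  free_realization K phi y -> free_realization K phi (fun a => i (y a)).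
Proof.
move=> gi [Hphi FR]; split; first exact: pp_holds_hom.
move=> N' KN' c Hc; have [h Hh] := FR N' KN' c Hc.
by exists (h \o g) => a /=; rewrite gi Hh.
Qed.

Lemma strict_atomic_of_split_cover (K : modclass R) (M : lmodType R) :
  (forall n (x : 'I_n -> M), exists (N : lmodType R) (i : {linear N -> M}),
       contains_tuple i x /\ locally_split i /\ strict_atomic K N) ->
  strict_atomic K M.
Proof.
move=> H n m; have [N [i [ct [ls sa]]]] := H n m.
have [y <-] := tuple_preimage ct.
have [phi FR] := sa n y; have [g Hg] := ls n y.
by exists phi; apply: free_realization_split FR.
Qed.

End Basics.

Section LinearExtension.
Variable R : pzRingType.

Definition comb (V : lmodType R) (v : nat -> V) P (s : nat -> R) : V :=
  \sum_(j < P) s j *: v j.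

Definition trunc (s : nat -> R) P j : R := if (j < P)%N then s j else 0.

(* Truncating the coefficients lets combinations be compared on a common
   range, and combinations are linear in the coefficients. *)
Lemma comb_trunc (V : lmodType R) (v : nat -> V) P Q s :
  (P <= Q)%N -> comb v Q (trunc s P) = comb v P s.
Proof.
move=> PQ; rewrite /comb (big_ord_widen _ (fun j => s j *: v j) PQ) [RHS]big_mkcond.
by apply: eq_bigr => j _; rewrite /trunc; case: ifP => _; rewrite ?scale0r.
Qed.

Lemma comb_lin (V : lmodType R) (v : nat -> V) P a s t :
  comb v P (fun j => a * s j + t j) = a *: comb v P s + comb v P t.
Proof.
by rewrite /comb scaler_sumr -big_split; apply: eq_bigr => j _; rewrite scalerDl scalerA.
Qed.

Lemma comb_delta (V : lmodType R) (v : nat -> V) P j :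
  (j < P)%N -> comb v P (fun i => if i == j then 1 else 0) = v j.
Proof.
move=> jP; rewrite /comb (bigD1 (Ordinal jP)) //= eqxx scale1r big1 ?addr0 //.
by move=> i; rewrite -val_eqE /= => /negbTE ->; rewrite scale0r.
Qed.

Section Extension.
Variables (N N' : lmodType R) (u : nat -> N) (w : nat -> N').
Hypothesis u_span : forall x, exists P s, x = comb u P s.
Hypothesis w_rel : forall P s, comb u P s = 0 -> comb w P s = 0.

Lemma comb_compat P s Q t : comb u P s = comb u Q t -> comb w P s = comb w Q t.
Proof.
have le_P : (P <= P + Q)%N by rewrite leq_addr.
have le_Q : (Q <= P + Q)%N by rewrite leq_addl.
pose d j := -1 * trunc s P j + trunc t Q j.
have combE (V : lmodType R) (v : nat -> V) : comb v (P + Q) d = comb v Q t - comb v P s.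
  by rewrite comb_lin !comb_trunc // scaleN1r addrC.
by move=> Euv; apply/eqP; rewrite eq_sym -subr_eq0 -combE w_rel // combE Euv subrr.
Qed.

Lemma linear_extension : exists h : {linear N -> N'}, forall j, h (u j) = w j.
Proof.
have [rep Hrep] : exists rep : N -> nat * (nat -> R),
    forall x, x = comb u (rep x).1 (rep x).2.
  apply: (ClassicalEpsilon.choice (fun x (Ps : nat * (nat -> R)) => x = comb u Ps.1 Ps.2)).
  by move=> x; have [P [s Ex]] := u_span x; exists (P, s).
pose h x := comb w (rep x).1 (rep x).2.
have hE P s : h (comb u P s) = comb w P s by apply: comb_compat; rewrite -Hrep.
have h_lin : linear h.
  move=> a x y; rewrite [x]Hrep [y]Hrep.
  set P := (rep x).1; set s := (rep x).2; set Q := (rep y).1; set t := (rep y).2.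
  rewrite -(comb_trunc u s (leq_addr Q P)) -(comb_trunc u t (leq_addl P Q)).
  by rewrite -comb_lin !hE comb_lin !comb_trunc ?leq_addr ?leq_addl.
pose hl : {linear N -> N'} := HB.pack h (GRing.isLinear.Build R N N' *:%R h h_lin).
exists hl => j /=.
by rewrite -(comb_delta u (ltnSn j)) hE comb_delta.
Qed.

End Extension.
End LinearExtension.

Section PPSequences.
Variable R : pzRingType.

Lemma pp_holds_seq (M : lmodType R) p (phi : ppf R p) (x : nat -> M) :
  pp_holds phi (fun a : 'I_p => x a) <->
  exists Y : nat -> M, forall i, \sum_(j < p + pp_k phi)
     pp_H phi i j *: (if (j < p)%N then x j else Y (j - p)%N) = 0.
Proof.
have catvE (Y : nat -> M) (j : 'I_(p + pp_k phi)) :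
    catv (fun a : 'I_p => x a) (fun b : 'I_(pp_k phi) => Y b) j =
    if (j < p)%N then x j else Y (j - p)%N.
  by rewrite /catv; case: splitP => [a ->|b ->] //; rewrite addKn.
split=> [[y Hy]|[Y HY]].
  pose Y j := if insub j is Some b then y b else 0.
  have Ey : y = (fun b => Y b) by apply: functional_extensionality => b; rewrite /Y valK.
  rewrite {}Ey in Hy.
  by exists Y => i; rewrite -[RHS](Hy i); apply: eq_bigr => j _; rewrite catvE.
by exists (fun b => Y b) => i; rewrite -[RHS](HY i); apply: eq_bigr => j _; rewrite catvE.
Qed.

Definition lin_rel P (s : nat -> R) : ppf R P := @PPF R P 1 0 (\matrix_(i, j) s j).

Lemma lin_relP (M : lmodType R) P s (z : nat -> M) :
  pp_holds (lin_rel P s) (fun a : 'I_P => z a) <-> comb z P s = 0.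
Proof.
have sumE (Y : nat -> M) : \sum_(j < P + 0) pp_H (lin_rel P s) ord0 j *:
    (if (j < P)%N then z j else Y (j - P)%N) = comb z P s.
  pose F j := s j *: (if (j < P)%N then z j else Y (j - P)%N).
  rewrite (eq_bigr (fun j : 'I_(P + 0) => F j)) => [|j _]; last by rewrite mxE.
  rewrite -(big_mkord xpredT F) addn0 big_mkord /comb.
  by apply: eq_bigr => j _; rewrite /F ltn_ord.
rewrite pp_holds_seq; split=> [[Y /(_ ord0)]|Hz].
  by rewrite sumE.
by exists (fun _ => 0) => i; rewrite (ord1 i); exact: (etrans (sumE (fun _ => 0)) Hz).
Qed.

(* Existential quantification of the last free variable of a pp formula. *)
Definition pp_exists_last p (Phi : ppf R p.+1) : ppf R p :=
  @PPF R p (pp_m Phi) (pp_k Phi).+1 (\matrix_(i, j) pp_H Phi i (inord j)).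

(* [pp_exists_last Phi] has the matrix of [Phi] with the last free variable
   read as the first witness; the sums defining them coincide. *)
Lemma pp_exists_last_sum (M : lmodType R) p (Phi : ppf R p.+1) i (G : nat -> M) :
  \sum_(j < p + pp_k (pp_exists_last Phi)) pp_H (pp_exists_last Phi) i j *: G j =
  \sum_(j < p.+1 + pp_k Phi) pp_H Phi i j *: G j.
Proof.
pose F j := pp_H Phi i (inord j) *: G j.
rewrite (eq_bigr (fun j : 'I_(p + (pp_k Phi).+1) => F j)) => [|j _]; last by rewrite mxE.
rewrite [RHS](eq_bigr (fun j : 'I_(p.+1 + pp_k Phi) => F j)) => [|j _].
  by rewrite -!(big_mkord xpredT F) addSnnS.
by rewrite /F inord_val.
Qed.

Definition upd (V : Type) (w : nat -> V) p (v : V) j : V := if j == p then v else w j.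

(* Moving the first witness into the last free variable. *)
Lemma shift_witness (M : lmodType R) p (z Y : nat -> M) j :
  (if (j < p)%N then z j else Y (j - p)%N) =
  (if (j < p.+1)%N then upd z p (Y 0%N) j else Y (j - p.+1).+1%N).
Proof.
rewrite /upd; case: (ltngtP j p) => [jp|pj|->].
- by rewrite ltnS ltnW // (ltn_eqF jp).
- by rewrite ltnS leqNgt pj /= subnSK.
- by rewrite ltnSn subnn.
Qed.

Lemma pp_exists_lastP (M : lmodType R) p (Phi : ppf R p.+1) (z : nat -> M) :
  pp_holds (pp_exists_last Phi) (fun a : 'I_p => z a) <->
  exists v, pp_holds Phi (fun a : 'I_p.+1 => upd z p v a).
Proof.
rewrite pp_holds_seq; split=> [[Y HY]|[v /pp_holds_seq [Y HY]]].
  exists (Y 0%N); apply/pp_holds_seq; exists (fun j => Y j.+1) => i.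
  rewrite -[RHS](HY i).
  rewrite (pp_exists_last_sum i (fun j => if (j < p)%N then z j else Y (j - p)%N)).
  by apply: eq_bigr => j _; rewrite shift_witness.
pose Y' j := if j is j'.+1 then Y j' else v.
exists Y' => i.
rewrite (pp_exists_last_sum i (fun j => if (j < p)%N then z j else Y' (j - p)%N)) -[RHS](HY i).
apply: eq_bigr => j _.
by rewrite (shift_witness _ _ Y').
Qed.

End PPSequences.

Section Forth.
Variables (R : pzRingType) (L : modclass R) (N N' : lmodType R).
Hypotheses (N_sat : strict_atomic L N) (N'_def : defcat L N').

Definition type_le p (z : nat -> N) (w : nat -> N') : Prop :=
  forall psi : ppf R p, pp_holds psi (fun a : 'I_p => z a) ->
    pp_holds psi (fun a : 'I_p => w a).

(* Forth step: the type of [z_p] over [z_0 .. z_(p-1)] is generated by a pp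
   formula [Phi], which is realized in [N'] over [w_0 .. w_(p-1)]. *)
Lemma type_le_extend p z w :
  type_le p z w -> exists v, type_le p.+1 z (upd w p v).
Proof.
move=> zw; have [Phi FR] := N_sat (fun a : 'I_p.+1 => z a).
have z_upd : (fun a : 'I_p.+1 => z a) = (fun a => upd z p (z p) a).
  by apply: functional_extensionality => a; rewrite /upd; case: eqP => [->|].
have /zw /pp_exists_lastP [v Hv] : pp_holds (pp_exists_last Phi) (fun a : 'I_p => z a).
  by apply/pp_exists_lastP; exists (z p); rewrite -z_upd; case: FR.
by exists v; apply: (free_realization_type FR N'_def Hv).
Qed.

Fixpoint approx (w0 : nat -> N') (E : nat * (nat -> N') -> N') n k : nat -> N' :=
  if k is k'.+1 then upd (approx w0 E n k') (n + k') (E (n + k', approx w0 E n k'))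
  else w0.

Lemma approx_stable w0 E n k k' j :
  (j < n + k)%N -> (k <= k')%N -> approx w0 E n k' j = approx w0 E n k j.
Proof.
move=> jk /subnKC <-; elim: (k' - k)%N => [|d IH]; first by rewrite addn0.
rewrite addnS /= /upd IH; case: eqP => // jE.
by move: jk; rewrite jE ltn_add2l ltnNge leq_addr.
Qed.

Lemma forth_sequence n (u : nat -> N) (w0 : nat -> N') :
  type_le n u w0 ->
  exists w, (forall j, (j < n)%N -> w j = w0 j) /\ forall k, type_le (n + k) u w.
Proof.
move=> uw0.
have step (pw : nat * (nat -> N')) :
    exists v, type_le pw.1 u pw.2 -> type_le pw.1.+1 u (upd pw.2 pw.1 v).
  case: (classic (type_le pw.1 u pw.2)) => [/type_le_extend [v Hv]|not_le].
    by exists v.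
  by exists 0 => /not_le.
have [E HE] := ClassicalEpsilon.choice _ step.
pose W := approx w0 E n.
have W_type k : type_le (n + k) u (W k).
  by elim: k => [|k IH]; [rewrite addn0 | rewrite addnS; apply: (HE (n + k, W k))].
exists (fun j => W j.+1 j); split=> [j jn|k].
  by rewrite /W (approx_stable w0 E (k := 0)) ?addn0.
have prefixE : (fun a : 'I_(n + k) => W a.+1 a) = (fun a => W k a).
  apply: functional_extensionality => a.
  have [ak|ka] := leqP a.+1 k.
    by rewrite /W (approx_stable _ _ _ ak) // addnS ltnS leq_addl.
  by rewrite /W (approx_stable _ _ (ltn_ord a) (ltnW ka)).
by move=> psi /(W_type k psi); rewrite -prefixE.
Qed.

(* A type-preserving sequence preserves all linear relations, these being
   expressible by pp formulas. *)
Lemma type_le_relations n (u : nat -> N) (w : nat -> N') :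
  (forall k, type_le (n + k) u w) ->
  forall P s, comb u P s = 0 -> comb w P s = 0.
Proof.
move=> uw P s uP; have le_P : (P <= n + P)%N by rewrite leq_addl.
rewrite -(comb_trunc w s le_P); apply/lin_relP/uw/lin_relP.
by rewrite comb_trunc.
Qed.

End Forth.

Section Countable.
Variable R : pzRingType.

Definition glue (V : lmodType R) n (y : 'I_n -> V) (f : nat -> V) j : V :=
  if insub j is Some a then y a else f (j - n)%N.

Lemma glue_ord (V : lmodType R) n (y : 'I_n -> V) f (a : 'I_n) : glue y f a = y a.
Proof. by rewrite /glue valK. Qed.

Lemma glue_prefix (V : lmodType R) n (y : 'I_n -> V) f :
  (fun a : 'I_n => glue y f a) = y.
Proof. by apply: functional_extensionality => a; rewrite glue_ord. Qed.

Lemma glue_span (V : lmodType R) n (y : 'I_n -> V) (f : nat -> V) :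
  (forall x, exists q (r : 'I_q -> R), x = \sum_(a < q) r a *: f a) ->
  forall x, exists P s, x = comb (glue y f) P s.
Proof.
move=> f_span x; have [q [r ->]] := f_span x.
exists (n + q)%N, (fun j => if (n <= j)%N then
  (if insub (j - n)%N is Some b then r b else 0) else 0).
rewrite /comb big_split_ord /= [X in _ = X + _]big1 ?add0r => [|i _]; last first.
  by rewrite leqNgt ltn_ord scale0r.
apply: eq_bigr => i _; rewrite leq_addr addKn valK /glue insubN ?addKn //.
by rewrite ltnNge leq_addr.
Qed.

Lemma countable_strict_atomic_defcat (L : modclass R) (N : lmodType R) :
  countably_generated N -> strict_atomic L N -> strict_atomic (defcat L) N.
Proof.
move=> [f f_span] N_sat n y; have [phi FR] := N_sat n y.
exists phi; split=> [|N' N'_def c Hc]; first by case: FR.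
pose u := glue y f; pose w0 := glue c (fun _ => 0).
have uw0 : type_le n u w0.
  by move=> psi; rewrite !glue_prefix; apply: (free_realization_type FR N'_def Hc).
have [w [w_w0 uw]] := forth_sequence N_sat N'_def uw0.
have [h hu] := linear_extension (glue_span y f_span) (type_le_relations uw).
by exists h => a; rewrite -(glue_ord y f) hu w_w0 // /w0 glue_ord.
Qed.

End Countable.

Theorem lemma4p3 (R : pzRingType) (L : modclass R) (M : lmodType R)
  (HL : exists L0 : lmodType R, L L0) :
  ((forall n (x : 'I_n -> M), exists (N : lmodType R) (i : {linear N -> M}),
       injective i /\ contains_tuple i x /\ pure L i /\ atomic L N) ->
     atomic L M /\ atomic (defcat L) M)
  /\
  ((forall n (x : 'I_n -> M), exists (N : lmodType R) (i : {linear N -> M}),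
       injective i /\ contains_tuple i x /\ locally_split i /\
       strict_atomic L N) ->
     strict_atomic L M)
  /\
  ((forall n (x : 'I_n -> M), exists (N : lmodType R) (i : {linear N -> M}),
       injective i /\ contains_tuple i x /\ locally_split i /\
       countably_generated N /\ strict_atomic L N) ->
     strict_atomic (defcat L) M).
Proof.
split; last split.
- move=> cover; have M_at := atomic_of_pure_cover cover.
  by split=> //; apply: atomic_defcat.
- move=> cover; apply: strict_atomic_of_split_cover => n x.
  by have [N [i [_ [ct [ls sa]]]]] := cover n x; exists N, i.
- move=> cover; apply: strict_atomic_of_split_cover => n x.
  have [N [i [_ [ct [ls [cg sa]]]]]] := cover n x; exists N, i.
  by split=> //; split=> //; apply: countable_strict_atomic_defcat.
Qed.
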